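(* Let $d=(d_1,\dots,d_n)$ be a weak composition, and let $\gamma=\gamma(d)$, $\mu=\mu(d)$. If $c_\beta\in\mathbb{Z}$ for the (finitely many) weak compositions $\beta$ with $x^\beta\prec x^\gamma$ appearing, then \[ m_\mu\cdot\Big(x^\gamma+\sum_{\beta\prec\gamma}c_\beta x^\beta\Big)=x^d+\sum_{x^e<_{ts}x^d}b_ex^e,\qquad b_e\in\mathbb{Z}. \]
   Context: For a weak composition $d$ of length $n$, $x^d=x_1^{d_1}\cdots x_n^{d_n}$ and $\lambda(d)$ is its weakly decreasing rearrangement. $x^\beta\prec x^e$ (also written $\beta\prec e$) means $\lambda(\beta)<_L\lambda(e)$ in lexicographic order; $x^d<_{ts}x^e$ means either $\lambda(d)<_L\lambda(e)$, or $\lambda(d)=\lambda(e)$ and $d<_Le$. The permutation $\sigma(d)$ labels the entries $d_1,\dots,d_n$ by $1,\dots,n$ from largest to smallest, ties broken left to right. The weak composition $\gamma(d)$: assign value $0$ to the position carrying label $n$; recursively, if the position carrying label $t$ has been assigned value $s$, assign to the position carrying label $t-1$ the value $s$ if that position is to the left of the position of $t$, and $s+1$ otherwise; $\gamma(d)_i$ is the value assigned to position $i$. Then $\mu(d)=d-\gamma(d)$ (componentwise). For example $d=(3,1,3,0,2,0)$ gives $\sigma(d)=(1,4,2,5,3,6)$, $\gamma(d)=(1,0,1,0,1,0)$, $\mu(d)=(2,1,2,0,1,0)$. $m_\mu$ is the sum of all distinct monomials in the $\mathfrak S_n$-orbit of $x^\mu$. *)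

From mathcomp Require Import all_boot all_order all_algebra all_fingroup.
From mathcomp Require Import mpoly.
Set Implicit Arguments. Unset Strict Implicit. Unset Printing Implicit Defensive.
Import GRing.Theory.

(* Weak compositions of length n are the monomial exponents 'X_{1..n};
   x^d is 'X_[d] in {mpoly int[n]}. Positions are 0-indexed. *)

Definition lam (n : nat) (d : 'X_{1..n}) : seq nat := sort geq (tval (multinom_val d)).

Fixpoint lexlt (s t : seq nat) : bool :=
  match s, t with
  | x :: s', y :: t' => (x < y) || ((x == y) && lexlt s' t')
  | [::], _ :: _ => true
  | _, _ => false
  end.

Definition prec (n : nat) (b e : 'X_{1..n}) : bool := lexlt (lam b) (lam e).

Definition lt_ts (n : nat) (d e : 'X_{1..n}) : bool :=
  lexlt (lam d) (lam e) || ((lam d == lam e) && lexlt (tval (multinom_val d)) (tval (multinom_val e))).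

(* positions listed by increasing label: largest entry first, ties left to right.
   The k-th element (0-indexed) is the position carrying label k+1 in sigma(d). *)
Definition label_order (n : nat) (d : 'X_{1..n}) : seq nat :=
  sort (fun i j : nat => let ds := tval (multinom_val d) in
          (nth 0 ds j < nth 0 ds i)%N || ((nth 0 ds i == nth 0 ds j) && (i <= j)%N)) (iota 0 n).

(* gamma(d)_i: with k the (0-indexed) label of position i, the number of
   t in [k, n-1) with pos(t) > pos(t+1) (i.e. the number of "+1" steps in the
   recursive assignment from label n down to label k+1). *)
Definition gamma_at (n : nat) (d : 'X_{1..n}) (i : nat) : nat :=
  let ps := label_order d in
  let k := index i ps in
  count (fun j => nth 0 ps j.+1 < nth 0 ps j)%N (iota k (n.-1 - k)).

Definition gamma (n : nat) (d : 'X_{1..n}) : 'X_{1..n} :=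
  [multinom gamma_at d i | i < n].

Definition mu (n : nat) (d : 'X_{1..n}) : 'X_{1..n} :=
  [multinom (d i - gamma d i)%N | i < n].

Definition mperm (n : nat) (s : 'S_n) (m : 'X_{1..n}) : 'X_{1..n} :=
  [multinom m (s i) | i < n].

Definition msymm (n : nat) (m : 'X_{1..n}) : {mpoly int[n]} :=
  \sum_(e <- undup [seq mperm s m | s : 'S_n]) 'X_[e].

From mathcomp Require Import all_boot all_order all_algebra all_fingroup.
From mathcomp Require Import mpoly zify.

Set Implicit Arguments.
Unset Strict Implicit.
Unset Printing Implicit Defensive.

(* The k-th partial sum of the decreasing rearrangement of x is the largest
   sum of k entries of x ([top_sum]).  Top sums are subadditive and invariant
   under permuting x; for d they split exactly as top_sum μ + top_sum γ,
   because μ and γ both weakly decrease along the labelling σ(d).  So for a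
   term x^(σμ + b) of the product, λ(σμ + b) is dominated by λ(d), strictly
   as soon as b ≺ γ, and dominance implies the lexicographic order.  When
   b = γ and λ(σμ + b) = λ(d), comparing level sets shows that σμ + γ is
   lexicographically below d unless it equals d, which forces σμ = μ. *)

Definition psum (k : nat) (s : seq nat) : nat := sumn (take k s).

Lemma psum0 s : psum 0 s = 0. Proof. by case: s. Qed.

Lemma psumS k a s : psum k.+1 (a :: s) = a + psum k s. Proof. by []. Qed.

Lemma lexlt_irrefl s : lexlt s s = false.
Proof. by elim: s => //= a s ->; rewrite ltnn eqxx. Qed.

Lemma lexlt_psum_lt x y i : size x = size y ->
  (forall k, k <= i -> psum k x <= psum k y) -> psum i.+1 x < psum i.+1 y ->
  lexlt x y.
Proof.
elim: x y i => [|a x IH] [|b y] i //= [] size_xy le_xy lt_xy.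
have le_ab : a <= b.
  case: i le_xy lt_xy => [|i] le_xy lt_xy; first by move: lt_xy; rewrite !psumS !psum0; lia.
  by have := le_xy 1 isT; rewrite !psumS !psum0; lia.
case: (ltngtP a b) le_ab => // eq_ab _; subst b => /=.
case: i le_xy lt_xy => [|i] le_xy lt_xy; first by move: lt_xy; rewrite !psumS !psum0; lia.
apply: (IH y i size_xy) => [k le_ki|]; last by move: lt_xy; rewrite !psumS; lia.
by have := le_xy k.+1 le_ki; rewrite !psumS; lia.
Qed.

Lemma lexlt_psum_neq x y : size x = size y ->
  (forall k, k <= size x -> psum k x <= psum k y) -> x != y -> lexlt x y.
Proof.
elim: x y => [|a x IH] [|b y] //= [] size_xy le_xy neq_xy.
have le_ab : a <= b by have := le_xy 1 isT; rewrite !psumS !psum0; lia.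
case: (ltngtP a b) le_ab => // eq_ab _; subst b => /=.
apply: (IH y size_xy); last by move: neq_xy; rewrite eqseq_cons eqxx.
by move=> k le_k; have := le_xy k.+1 le_k; rewrite !psumS; lia.
Qed.

Lemma lexlt_psum_first x y : size x = size y -> lexlt x y ->
  exists2 i, i < size x &
    (forall k, k <= i -> psum k x = psum k y) /\ psum i.+1 x < psum i.+1 y.
Proof.
elim: x y => [|a x IH] [|b y] //= [] size_xy /orP[lt_ab|/andP[/eqP <- lt_xy]].
- exists 0 => //; split; last by rewrite !psumS !psum0; lia.
  by move=> k; rewrite leqn0 => /eqP->; rewrite !psum0.
- have [i lt_i [eq_xy lt_psum]] := IH y size_xy lt_xy.
  exists i.+1 => //; split; last by rewrite !psumS; lia.
  by move=> [|k] le_k; rewrite ?psum0 // !psumS eq_xy.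
Qed.

Lemma lexlt_nth x y i : size x = size y -> i < size x ->
  (forall j, j < i -> nth 0 x j = nth 0 y j) -> nth 0 x i < nth 0 y i -> lexlt x y.
Proof.
elim: x y i => [|a x IH] [|b y] i //= [] size_xy lt_i eq_xy lt_xy.
case: i lt_i eq_xy lt_xy => [|i] lt_i eq_xy lt_xy /=; first by rewrite lt_xy.
have := eq_xy 0 isT => /= ->; rewrite ltnn eqxx /=.
by apply: (IH y i size_xy lt_i) => // j lt_ji; apply: (eq_xy j.+1).
Qed.

Section TopSums.
Variable n : nat.
Implicit Types (x y : 'I_n -> nat) (J K : {set 'I_n}).

Definition top_sum k x := \max_(J : {set 'I_n} | #|J| == k) \sum_(j in J) x j.

Definition top_set x J := forall j j', j \in J -> j' \notin J -> x j' <= x j.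

Lemma leq_sum_top_sum x J : \sum_(j in J) x j <= top_sum #|J| x.
Proof. by rewrite /top_sum (bigD1 J) ?eqxx //= leq_maxl. Qed.

Lemma top_setE x J : top_set x J <-> \sum_(j in J) x j = top_sum #|J| x.
Proof.
split=> [J_top | J_max j j' jJ j'J].
  apply/eqP; rewrite eqn_leq leq_sum_top_sum; apply/bigmax_leqP => K /eqP cardK.
  rewrite (big_setID J) [X in _ <= X](big_setID K) /= setIC leq_add2l.
  set M := \max_(i in K :\: J) x i.
  apply: (@leq_trans (\sum_(i in K :\: J) M)).
    by apply: leq_sum => i iKJ; apply: leq_bigmax_cond.
  apply: (@leq_trans (\sum_(i in J :\: K) M)); last first.
    apply: leq_sum => i; rewrite inE => /andP[iK iJ].
    by apply/bigmax_leqP => i'; rewrite inE => /andP[i'J i'K]; apply: J_top.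
  rewrite !sum_nat_const leq_mul2r; apply/orP; right.
  have := cardsID J K; have := cardsID K J; rewrite setIC; lia.
rewrite leqNgt; apply/negP => lt_x.
set K := j' |: (J :\ j).
have j'J' : j' \notin J :\ j by rewrite !inE negb_and j'J orbT.
have cardK : #|K| = #|J| by rewrite cardsU1 j'J' (cardsD1 j J) jJ.
have := leq_sum_top_sum x K; rewrite cardK -J_max big_setU1 //= (big_setD1 j jJ) /=.
lia.
Qed.

Lemma top_sumD_le k x y : top_sum k (fun i => x i + y i) <= top_sum k x + top_sum k y.
Proof.
apply/bigmax_leqP => J /eqP <-; rewrite big_split /=.
by apply: leq_add; apply: leq_sum_top_sum.
Qed.

Lemma eq_top_sum k x y : x =1 y -> top_sum k x = top_sum k y.
Proof. by move=> eq_xy; apply: eq_bigr => J _; apply: eq_bigr. Qed.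

Lemma top_sum_perm_le k x (s : 'S_n) : top_sum k (fun i => x (s i)) <= top_sum k x.
Proof.
apply/bigmax_leqP => J /eqP <-.
rewrite -(card_imset J (@perm_inj _ s)) -(big_imset _ (in2W (@perm_inj _ s))) /=.
exact: leq_sum_top_sum.
Qed.

Lemma top_sum_perm k x (s : 'S_n) : top_sum k (fun i => x (s i)) = top_sum k x.
Proof.
apply/eqP; rewrite eqn_leq top_sum_perm_le /=.
have := top_sum_perm_le k (fun i => x (s i)) s^-1.
by rewrite (@eq_top_sum k _ x) // => i; rewrite permKV.
Qed.

Lemma take_sort_top_set (R : rel 'I_n) k : total R -> transitive R -> k <= n ->
  let J := [set j in take k (sort R (enum 'I_n))] in
  #|J| = k /\ forall j j', j \in J -> j' \notin J -> R j j'.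
Proof.
move=> R_total R_trans le_kn J; set I := sort R (enum 'I_n).
have uniq_I : uniq I by rewrite sort_uniq enum_uniq.
split.
  rewrite cardsE; move/card_uniqP: (take_uniq k uniq_I) => ->.
  by rewrite size_takel // size_sort size_enum_ord.
move=> j j'; rewrite !inE => jJ j'J.
have j'_drop : j' \in drop k I.
  have : j' \in I by rewrite mem_sort mem_enum.
  by rewrite -{1}(cat_take_drop k I) mem_cat (negbTE j'J).
have : pairwise R I by rewrite -sorted_pairwise // sort_sorted.
rewrite -(cat_take_drop k I) pairwise_cat => /and3P[/allrelP R_IJ _ _].
exact: R_IJ.
Qed.

Lemma card_top_setI_ge x K t : top_set x K ->
  #|K :&: [set j | t <= x j]| = minn #|K| #|[set j | t <= x j]|.
Proof.
move=> K_top; set G := [set j | t <= x j].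
have [GK|/subsetPn[j' j'G j'K]] := boolP (G \subset K).
  by rewrite (setIidPr GK) (minn_idPr _) // subset_leq_card.
have KG : K \subset G.
  apply/subsetP => j jK; move: j'G; rewrite !inE => le_t.
  exact: leq_trans le_t (K_top _ _ jK j'K).
by rewrite (setIidPl KG) (minn_idPl _) // subset_leq_card.
Qed.

Lemma card_setI_eq x K g :
  #|K :&: [set j | x j == g]| = #|K :&: [set j | g <= x j]| - #|K :&: [set j | g < x j]|.
Proof.
have := cardsID [set j | g < x j] (K :&: [set j | g <= x j]).
have -> : K :&: [set j | g <= x j] :&: [set j | g < x j] = K :&: [set j | g < x j].
  by apply/setP => j; rewrite !inE -andbA; case: (j \in K); case: ltngtP.
have -> : K :&: [set j | g <= x j] :\: [set j | g < x j] = K :&: [set j | x j == g].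
  by apply/setP => j; rewrite !inE; case: (j \in K); rewrite ?andbF //=; case: ltngtP.
by move=> <-; rewrite addKn.
Qed.

Lemma card_top_set_level x K K' g : top_set x K -> top_set x K' -> #|K| = #|K'| ->
  #|K :&: [set j | x j == g]| = #|K' :&: [set j | x j == g]|.
Proof.
move=> K_top K'_top cardKK'.
by rewrite (card_setI_eq x K) (card_setI_eq x K') !card_top_setI_ge // cardKK'.
Qed.

End TopSums.

Section Multinomials.
Variable n : nat.

Lemma tval_mnm (m : 'X_{1..n}) : tval (multinom_val m) = map m (enum 'I_n).
Proof. by rewrite -[LHS]map_tnth_enum. Qed.

Lemma size_lam (m : 'X_{1..n}) : size (lam m) = n.
Proof. by rewrite size_sort size_tuple. Qed.

Lemma psum_lam (m : 'X_{1..n}) k : k <= n -> psum k (lam m) = top_sum k m.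
Proof.
move=> le_kn; rewrite /lam tval_mnm sort_map.
set R := relpre m geq.
have R_total : total R by move=> a b; rewrite /R /= leq_total.
have R_trans : transitive R by move=> a b c; rewrite /R /= => ba cb; apply: leq_trans cb ba.
have [cardJ J_top] := take_sort_top_set R_total R_trans le_kn.
rewrite /psum -map_take sumnE big_map big_uniq ?take_uniq ?sort_uniq ?enum_uniq //.
rewrite -[in top_sum k _]cardJ -(proj1 (top_setE _ _)) => [|j j' jJ j'J].
  by apply: eq_bigl => j; rewrite inE.
exact: J_top.
Qed.

Lemma perm_eq_sum_mnm (c e : 'X_{1..n}) (P : pred nat) (F : nat -> nat) :
  perm_eq (tval (multinom_val c)) (tval (multinom_val e)) ->
  \sum_(j in [set j | P (c j)]) F (c j) = \sum_(j in [set j | P (e j)]) F (e j).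
Proof.
have sumE (m : 'X_{1..n}) :
    \sum_(j in [set j | P (m j)]) F (m j) = \sum_(y <- tval (multinom_val m) | P y) F y.
  by rewrite big_set tval_mnm big_map big_enum_cond.
by rewrite !sumE; apply: perm_big.
Qed.

Lemma lexlt_mnm (c e : 'X_{1..n}) : c != e ->
  (forall i : 'I_n, (forall j : 'I_n, j < i -> c j = e j) -> c i <= e i) ->
  lexlt (tval (multinom_val c)) (tval (multinom_val e)).
Proof.
move=> neq_ce le_ce.
have [i0 neq_i0] : exists i0, c i0 != e i0.
  apply/existsP; apply: contraR neq_ce; rewrite negb_exists => /forallP eq_ce.
  by apply/eqP/mnmP => j; apply/eqP; rewrite -[_ == _]negbK eq_ce.
case: (@arg_minnP _ i0 (fun j => c j != e j) val neq_i0) => i neq_i i_min.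
have eq_before (j : 'I_n) : j < i -> c j = e j.
  by move=> lt_ji; apply/eqP; apply: contraTT lt_ji; rewrite -leqNgt; apply: i_min.
apply: (@lexlt_nth _ _ i); rewrite ?size_tuple //.
  move=> j lt_ji; have lt_jn : j < n := ltn_trans lt_ji (ltn_ord i).
  by rewrite -!(mnm_nth 0 _ (Ordinal lt_jn)); apply: eq_before.
by rewrite -!(mnm_nth 0) ltn_neqAle neq_i le_ce.
Qed.

End Multinomials.

Section Labels.
Variables (n : nat) (d : 'X_{1..n}).

Definition label_le (i j : nat) : bool :=
  let ds := tval (multinom_val d) in
  (nth 0 ds j < nth 0 ds i) || ((nth 0 ds i == nth 0 ds j) && (i <= j)).

(* [pos k] is the position carrying label [k.+1]. *)
Local Notation pos k := (nth 0 (label_order d) k).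

Lemma label_orderE : label_order d = sort label_le (iota 0 n). Proof. by []. Qed.

Lemma label_le_total : total label_le.
Proof. by move=> i j; rewrite /label_le /=; case: ltngtP => //= _; rewrite leq_total. Qed.

Lemma label_le_trans : transitive label_le.
Proof.
move=> j i k; rewrite /label_le /=.
by move=> /orP[lt_ji|/andP[/eqP eq_ij le_ij]] /orP[lt_kj|/andP[/eqP eq_jk le_jk]]; lia.
Qed.

Lemma label_le_anti i j : label_le i j -> label_le j i -> i = j.
Proof.
rewrite /label_le /=.
by move=> /orP[lt_ji|/andP[/eqP eq_ij le_ij]] /orP[lt_ij|/andP[/eqP eq_ji le_ji]]; lia.
Qed.

Lemma size_label_order : size (label_order d) = n.
Proof. by rewrite label_orderE size_sort size_iota. Qed.

Lemma uniq_label_order : uniq (label_order d).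
Proof. by rewrite label_orderE sort_uniq iota_uniq. Qed.

Lemma mem_label_order i : (i \in label_order d) = (i < n).
Proof. by rewrite label_orderE mem_sort mem_iota. Qed.

Lemma label_le_pos k k' : k <= k' -> k' < n -> label_le (pos k) (pos k').
Proof.
move=> le_kk' lt_k'n.
have label_le_refl : reflexive label_le by move=> i; rewrite /label_le eqxx leqnn orbT.
apply: (sorted_leq_nth label_le_trans label_le_refl 0).
- by rewrite label_orderE sort_sorted //; apply: label_le_total.
- by rewrite inE size_label_order; apply: leq_ltn_trans lt_k'n.
- by rewrite inE size_label_order.
- exact: le_kk'.
Qed.

Definition dlab k := nth 0 (tval (multinom_val d)) (pos k).

Definition descent t := pos t.+1 < pos t.

Definition glab k := count descent (iota k (n.-1 - k)).

Lemma dlab_step k : k.+1 < n -> dlab k.+1 <= dlab k /\ (descent k -> dlab k.+1 < dlab k).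
Proof.
move=> lt_kn; have := label_le_pos (leqnSn k) lt_kn; rewrite /label_le /dlab /descent.
by case/orP=> [/ltnW -> //|/andP[/eqP -> ?]]; split=> //; lia.
Qed.

Lemma glab_cat k m : k + m <= n.-1 -> glab k = count descent (iota k m) + glab (k + m).
Proof. by move=> le_kmn; rewrite /glab -count_cat -iotaD; congr (count _ (iota _ _)); lia. Qed.

Lemma glab_step k : k.+1 < n -> glab k = descent k + glab k.+1.
Proof. by move=> lt_kn; rewrite (@glab_cat k 1) ?addn1 /= ?addn0 //; lia. Qed.

Lemma glab_le_dlab k : k < n -> glab k <= dlab k.
Proof.
move=> lt_kn; move: {2}(n.-1 - k) (erefl (n.-1 - k)) => m.
elim: m k lt_kn => [|m IH] k lt_kn def_m.
  by rewrite /glab def_m.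
have lt_k1n : k.+1 < n by lia.
rewrite glab_step //; have [le_dlab lt_dlab] := dlab_step lt_k1n.
have := IH k.+1 lt_k1n ltac:(lia).
by case: (descent k) lt_dlab => /= [/(_ isT)|_]; lia.
Qed.

Lemma glab_dlab_step k : k.+1 < n ->
  glab k.+1 <= glab k /\ dlab k.+1 - glab k.+1 <= dlab k - glab k.
Proof.
move=> lt_kn; rewrite (glab_step lt_kn); have [le_dlab lt_dlab] := dlab_step lt_kn.
have := glab_le_dlab lt_kn.
by case: (descent k) lt_dlab => /= [/(_ isT)|_]; lia.
Qed.

Lemma glab_dlab_mono k k' : k <= k' -> k' < n ->
  glab k' <= glab k /\ dlab k' - glab k' <= dlab k - glab k.
Proof.
move=> le_kk'; rewrite -(subnKC le_kk'); elim: (k' - k) => [|m IH] lt_n.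
  by rewrite addn0.
have [? ?] := IH ltac:(lia); have [? ?] := @glab_dlab_step (k + m) ltac:(lia).
by rewrite addnS; lia.
Qed.

(* Labels with equal γ form a run without descents, so their positions increase. *)
Lemma pos_lt_of_glab_eq k k' : k < k' -> k' < n -> glab k = glab k' -> pos k < pos k'.
Proof.
move=> lt_kk' lt_k'n eq_glab.
have no_descent : ~~ has descent (iota k (k' - k)).
  by rewrite has_count -leqNgt; move: eq_glab; rewrite (@glab_cat k (k' - k)) ?subnKC; lia.
have le_pos m : k + m <= k' -> pos k <= pos (k + m).
  elim: m => [|m IH] le_m; first by rewrite addn0.
  apply: leq_trans (IH ltac:(lia)) _; rewrite addnS leqNgt.
  by apply: (hasPn no_descent); rewrite mem_iota; lia.
have := le_pos (k' - k); rewrite subnKC ?(ltnW lt_kk') // => /(_ (leqnn k')) le_pos_kk'.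
rewrite ltn_neqAle le_pos_kk' andbT.
apply/eqP => eq_pos; move/uniqP: uniq_label_order => /(_ 0 k k').
by rewrite !inE size_label_order => /(_ ltac:(lia) lt_k'n eq_pos); lia.
Qed.

Definition lab (i : 'I_n) := index (val i) (label_order d).

Lemma lab_lt i : lab i < n.
Proof. by rewrite -[X in _ < X]size_label_order index_mem mem_label_order ltn_ord. Qed.

Lemma pos_lab i : pos (lab i) = i.
Proof. by rewrite nth_index // mem_label_order ltn_ord. Qed.

Lemma lab_inj : injective lab.
Proof. by move=> j j' eq_lab; apply: val_inj; rewrite /= -(pos_lab j) -(pos_lab j') eq_lab. Qed.

Lemma dlab_lab i : dlab (lab i) = d i.
Proof. by rewrite /dlab pos_lab (mnm_nth 0). Qed.

Lemma gamma_lab i : gamma d i = glab (lab i).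
Proof. by rewrite mnmE. Qed.

Lemma mu_lab i : mu d i = dlab (lab i) - glab (lab i).
Proof. by rewrite mnmE dlab_lab gamma_lab. Qed.

Lemma gamma_le i : gamma d i <= d i.
Proof. by rewrite gamma_lab -dlab_lab glab_le_dlab ?lab_lt. Qed.

Lemma gamma_mu_antimono (j j' : 'I_n) : lab j <= lab j' ->
  gamma d j' <= gamma d j /\ mu d j' <= mu d j.
Proof. by move=> le_lab; rewrite !gamma_lab !mu_lab; apply: glab_dlab_mono; rewrite ?lab_lt. Qed.

Lemma lab_lt_of_label_le (j j' : 'I_n) : label_le j j' -> j != j' -> lab j < lab j'.
Proof.
move=> le_jj' neq_jj'; rewrite ltnNge; apply: contra neq_jj' => le_lab.
have := label_le_pos le_lab (lab_lt j); rewrite !pos_lab => le_j'j.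
by apply/eqP/val_inj/label_le_anti.
Qed.

Lemma lab_lt_of_ltn (j j' : 'I_n) : d j' < d j -> lab j < lab j'.
Proof.
move=> lt_d; apply: lab_lt_of_label_le; first by rewrite /label_le -!(mnm_nth 0) lt_d.
by apply: contraTneq lt_d => ->; rewrite ltnn.
Qed.

Lemma top_set_of_lab (K : {set 'I_n}) :
  (forall j j', j \in K -> j' \notin K -> lab j < lab j') ->
  top_set (gamma d) K /\ top_set (mu d) K.
Proof.
by move=> lab_K; split=> j j' jK j'K; have /ltnW/gamma_mu_antimono[] := lab_K _ _ jK j'K.
Qed.

Lemma leq_of_gamma_eq (i j : 'I_n) : gamma d i = gamma d j -> i < j -> d j <= d i.
Proof.
move=> eq_gamma lt_ij.
have lt_lab : lab i < lab j.
  rewrite ltn_neqAle; apply/andP; split.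
    by apply: contraTneq lt_ij => /lab_inj ->; rewrite ltnn.
  rewrite leqNgt; apply/negP => lt_ji.
  have := pos_lt_of_glab_eq lt_ji (lab_lt i); rewrite -!gamma_lab eq_gamma !pos_lab.
  by move=> /(_ erefl); rewrite ltnNge (ltnW lt_ij).
have := label_le_pos (ltnW lt_lab) (lab_lt j); rewrite !pos_lab /label_le -!(mnm_nth 0).
by case/orP=> [/ltnW //|/andP[/eqP -> _]].
Qed.

End Labels.

Section Decomposition.
Variables (n : nat) (d : 'X_{1..n}).

Local Notation shift s b := (mperm s (mu d) + b)%MM.

Lemma mu_add_gamma i : mu d i + gamma d i = d i.
Proof. by have := gamma_le d i; rewrite /mu mnmE; lia. Qed.

Lemma mu_addm_gamma : (mu d + gamma d)%MM = d.
Proof. by apply/mnmP => i; rewrite mnmDE mu_add_gamma. Qed.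

Lemma sum_lab_prefix (K : {set 'I_n}) :
  (forall j j', j \in K -> j' \notin K -> lab d j < lab d j') ->
  \sum_(j in K) d j = top_sum #|K| (mu d) + top_sum #|K| (gamma d).
Proof.
move=> /top_set_of_lab[/top_setE <- /top_setE <-].
by rewrite -big_split; apply: eq_bigr => j _; apply/esym/mu_add_gamma.
Qed.

Lemma top_sum_d k : k <= n -> top_sum k d = top_sum k (mu d) + top_sum k (gamma d).
Proof.
move=> le_kn; set R := fun i j : 'I_n => label_le d i j.
have R_total : total R by move=> i j; apply: label_le_total.
have R_trans : transitive R by move=> i j l; apply: label_le_trans.
have [cardK K_lab] := take_sort_top_set R_total R_trans le_kn.
set K := [set j in _] in cardK K_lab.
have sumK := @sum_lab_prefix K.
apply/eqP; rewrite eqn_leq; apply/andP; split.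
  rewrite (@eq_top_sum _ k _ (fun i => mu d i + gamma d i)) => [|i]; last by rewrite mu_add_gamma.
  exact: top_sumD_le.
rewrite -cardK -sumK ?leq_sum_top_sum // => j j' jK j'K.
by apply: lab_lt_of_label_le (K_lab _ _ jK j'K) _; apply: contraNneq j'K => <-.
Qed.

Lemma psum_lam_d k : k <= n -> psum k (lam d) = top_sum k (mu d) + psum k (lam (gamma d)).
Proof. by move=> le_kn; rewrite !psum_lam // top_sum_d. Qed.

Lemma psum_lam_shift_le (s : 'S_n) b k : k <= n ->
  psum k (lam (shift s b)) <= top_sum k (mu d) + psum k (lam b).
Proof.
move=> le_kn; rewrite !psum_lam //.
rewrite (@eq_top_sum _ k _ (fun i => mu d (s i) + b i)) => [|i]; last by rewrite mnmDE mnmE.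
by rewrite -(top_sum_perm k (mu d) s) top_sumD_le.
Qed.

(* If c := σμ + γ exceeded d at the first position i where they differ, the
   level sets J of c and J' of d above v := c i would have equal size and sum,
   which squeezes J into a top set for γ, like J'.  So J and J' contain equally
   many positions with γ-value γ_i; but those of J' all lie in J (equal γ-values
   carry weakly decreasing entries of d), and i is one of J only. *)
Lemma shift_prefix_le (s : 'S_n) (i : 'I_n) : lam (shift s (gamma d)) = lam d ->
  (forall j : 'I_n, j < i -> shift s (gamma d) j = d j) -> shift s (gamma d) i <= d i.
Proof.
set c := shift s (gamma d) => eq_lam eq_before; rewrite leqNgt; apply/negP => lt_d.
have perm_cd : perm_eq (tval (multinom_val c)) (tval (multinom_val d)).
  apply: (@perm_trans _ (lam c)); first by rewrite perm_sym perm_sort.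
  by rewrite eq_lam perm_sort.
set v := c i; set J := [set j | v <= c j]; set J' := [set j | v <= d j].
have cardJ : #|J| = #|J'| by rewrite -!sum1_card (perm_eq_sum_mnm (leq v) (fun _ => 1) perm_cd).
have sumJ : \sum_(j in J) c j = \sum_(j in J') d j := perm_eq_sum_mnm (leq v) id perm_cd.
have J'_lab j j' : j \in J' -> j' \notin J' -> lab d j < lab d j'.
  by rewrite !inE -ltnNge => le_vj lt_j'v; apply: lab_lt_of_ltn; apply: leq_trans le_vj.
have [J'_gamma _] := top_set_of_lab J'_lab.
have J_gamma : top_set (gamma d) J.
  apply/top_setE; apply/eqP; rewrite eqn_leq leq_sum_top_sum /=.
  have le_mu : \sum_(j in J) mu d (s j) <= top_sum #|J| (mu d).
    by rewrite -(top_sum_perm _ (mu d) s) leq_sum_top_sum.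
  have sumJ_c : \sum_(j in J) c j = \sum_(j in J) mu d (s j) + \sum_(j in J) gamma d j.
    by rewrite -big_split; apply: eq_bigr => j _; rewrite mnmDE mnmE.
  move: sumJ; rewrite sumJ_c sum_lab_prefix // -cardJ => eq_sum.
  by rewrite -(leq_add2l (\sum_(j in J) mu d (s j))) eq_sum leq_add2r.
set g := gamma d i.
have proper_level : J' :&: [set j | gamma d j == g] \proper J :&: [set j | gamma d j == g].
  apply/properP; split.
    apply/subsetP => j; rewrite !inE => /andP[le_vdj /eqP gamma_j]; rewrite gamma_j eqxx andbT.
    have lt_dij : d i < d j := leq_trans lt_d le_vdj.
    case: (ltngtP j i) => [lt_ji|lt_ij|/val_inj eq_ji].
    - by rewrite eq_before.
    - by move: lt_dij; rewrite ltnNge leq_of_gamma_eq.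
    - by rewrite eq_ji ltnn in lt_dij.
  by exists i; rewrite !inE ?leqnn ?eqxx //= andbT -ltnNge.
by have := proper_card proper_level; rewrite (card_top_set_level g J_gamma J'_gamma cardJ) ltnn.
Qed.

Lemma shift_lt_ts (s : 'S_n) b : b = gamma d \/ prec b (gamma d) ->
  lt_ts (shift s b) d \/ (shift s b = d /\ mperm s (mu d) = mu d).
Proof.
case=> [->|prec_b].
- have [eq_cd|neq_cd] := eqVneq (shift s (gamma d)) d.
    by right; split=> //; move: eq_cd; rewrite -[X in _ = X]mu_addm_gamma => /addIm.
  left; rewrite /lt_ts.
  have [eq_lam|neq_lam] := eqVneq (lam (shift s (gamma d))) (lam d).
    rewrite eq_lam lexlt_irrefl /=; apply: lexlt_mnm neq_cd _ => i.
    exact: shift_prefix_le eq_lam.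
  apply/orP; left; apply: lexlt_psum_neq neq_lam; rewrite ?size_lam // => k le_kn.
  by rewrite psum_lam_d //; apply: psum_lam_shift_le.
- left; apply/orP; left.
  have size_b : size (lam b) = size (lam (gamma d)) by rewrite !size_lam.
  have [i lt_i [eq_psum lt_psum]] := lexlt_psum_first size_b prec_b.
  rewrite size_lam in lt_i.
  apply: (@lexlt_psum_lt _ _ i); first by rewrite !size_lam.
    move=> k le_ki; have le_kn : k <= n by apply: leq_trans le_ki (ltnW lt_i).
    by rewrite psum_lam_d // -eq_psum // psum_lam_shift_le.
  rewrite psum_lam_d //; apply: leq_ltn_trans (psum_lam_shift_le _ _ lt_i) _.
  by rewrite ltn_add2l.
Qed.

End Decomposition.

Lemma lt_ts_irrefl n (e : 'X_{1..n}) : lt_ts e e = false.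
Proof. by rewrite /lt_ts !lexlt_irrefl andbF. Qed.

Lemma mperm1 n (m : 'X_{1..n}) : mperm 1 m = m.
Proof. by apply/mnmP => i; rewrite mnmE perm1. Qed.

Lemma mem_orbit n (m o : 'X_{1..n}) :
  o \in undup [seq mperm s m | s : 'S_n] -> exists s, o = mperm s m.
Proof. by rewrite mem_undup => /mapP[s _ ->]; exists s. Qed.

Lemma mem_orbit_self n (m : 'X_{1..n}) : m \in undup [seq mperm s m | s : 'S_n].
Proof. by rewrite mem_undup; apply/mapP; exists 1%g; rewrite ?mem_enum ?mperm1. Qed.

Import GRing.Theory.
Local Open Scope ring_scope.

Lemma mcoeff_mulX n (R : nzRingType) m (p : {mpoly R[n]}) k : ('X_[m] * p)@_(m + k) = p@_k.
Proof. by rewrite -commr_mpolyX mcoeffMX. Qed.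

Lemma msupp_mulX n (R : nzRingType) m (p : {mpoly R[n]}) e :
  e \in msupp ('X_[m] * p) -> exists2 b, b \in msupp p & e = (m + b)%MM.
Proof. by rewrite -commr_mpolyX (perm_mem (msuppMX p m)) => /mapP. Qed.

Theorem lemma4p3 (n : nat) (d : 'X_{1..n}) (p : {mpoly int[n]}) :
  p@_(gamma d) = 1%R ->
  (forall b : 'X_{1..n}, b \in msupp p -> b != gamma d -> prec b (gamma d)) ->
  (msymm (mu d) * p)@_d = 1%R /\
  (forall e : 'X_{1..n}, e \in msupp (msymm (mu d) * p) -> e != d -> lt_ts e d).
Proof.
move=> p_gamma p_prec.
have shift_cases o b : o \in undup [seq mperm s (mu d) | s : 'S_n] -> b \in msupp p ->
    lt_ts (o + b)%MM d \/ ((o + b)%MM = d /\ o = mu d).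
  case/mem_orbit=> s -> b_p; apply: shift_lt_ts.
  by have [->|/(p_prec _ b_p)] := eqVneq b (gamma d); [left|right].
rewrite /msymm mulr_suml; split.
- rewrite raddf_sum (bigD1_seq (mu d)) ?mem_orbit_self ?undup_uniq //=.
  have := mcoeff_mulX (mu d) p (gamma d); rewrite mu_addm_gamma => ->.
  rewrite p_gamma big1_seq ?addr0 // => o /andP[neq_o o_orb].
  apply: memN_msupp_eq0; apply/negP => /msupp_mulX[b b_p eq_d].
  have [|[_ eq_o]] := shift_cases o b o_orb b_p; first by rewrite -eq_d lt_ts_irrefl.
  by rewrite eq_o eqxx in neq_o.
- move=> e /msupp_sum_le/flattenP[q /mapP[o]].
  rewrite mem_filter /= => o_orb -> /msupp_mulX[b b_p ->] neq_e.
  by have [//|[eq_e _]] := shift_cases o b o_orb b_p; rewrite eq_e eqxx in neq_e.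
Qed.
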